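(* Let $n_0,L\in\mathbb{N}_+$, $n_1,\dots,n_L\in\mathbb{N}_+$, $h_l\in\mathrm{RL}(n_{l-1},n_l)$ for $l=1,\dots,L$, $\mathbf{h}=(h_1,\dots,h_L)$, and $\gamma\in\Gamma$. Then for every $l\in\{2,\dots,L\}$, $$\tilde{\mathcal{H}}^{(l)}(\mathcal{S}^{(l)}_{\mathbf{h}})\preceq\varphi^{(\gamma)}_{n_l}\big(\tilde{\mathcal{H}}^{(l-1)}(\mathcal{S}^{(l-1)}_{\mathbf{h}})\big).$$
   Context: $\sigma(x)=\max(0,x)$; $\mathrm{RL}(n,n')$ ($n,n'\in\mathbb{N}_+$) is the set of maps $h:\mathbb{R}^n\to\mathbb{R}^{n'}$, $h(x)_i=\sigma(\langle x,w_i\rangle+b_i)$ for some $W\in\mathbb{R}^{n'\times n}$ with rows $w_i$, $b\in\mathbb{R}^{n'}$; convention: $\mathrm{RL}(0,n')$ are constant maps $\{0\}\to\mathbb{R}^{n'}$ with $\mathcal{H}_{n'}(\mathcal{S}_h)={\rm e}_0$. Signature $S_h(x)_i=1$ iff $\langle x,w_i\rangle+b_i>0$ else $0$; $\mathcal{S}_h=\{S_h(x)\}$; $|s|=\sum_i s_i$. Multi signature $S_{\mathbf{h}}(x)=(S_{h_1}(x),S_{h_2}(h_1(x)),\dots,S_{h_L}(h_{L-1}\circ\cdots\circ h_1(x)))$, $\mathcal{S}_{\mathbf{h}}=\{S_{\mathbf{h}}(x):x\in\mathbb{R}^{n_0}\}$, and $\mathcal{S}^{(l)}_{\mathbf{h}}=\{(s_1,\dots,s_l):(s_1,\dots,s_L)\in\mathcal{S}_{\mathbf{h}}\}$.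 $V$: sequences $(v_j)_{j\in\mathbb{N}}$ of nonnegative integers with finite sum; ${\rm e}_i$ has $({\rm e}_i)_j=\delta_{ij}$; $v\preceq w$ iff $\sum_{j\ge J}v_j\le\sum_{j\ge J}w_j$ for all $J$; $\max_i(v^{(i)})_J=\max_i\sum_{j\ge J}v^{(i)}_j-\max_i\sum_{j\ge J+1}v^{(i)}_j$ for finite families. $\mathcal{H}_{n'}(\mathcal{S})=(|\{s\in\mathcal{S}:|s|=j\}|)_j$. $\tilde{\mathcal{H}}^{(l)}(U)=(|\{(s_1,\dots,s_l)\in U:\min(n_0,|s_1|,\dots,|s_l|)=j\}|)_{j\in\mathbb{N}}$ for $U\subseteq\{0,1\}^{n_1}\times\dots\times\{0,1\}^{n_l}$. $\Gamma$: families $(\gamma_{n,n'})_{n'\in\mathbb{N}_+,n\in\{0,\dots,n'\}}$ in $V$ with (i) $\max\{\mathcal{H}_{n'}(\mathcal{S}_h):h\in\mathrm{RL}(n,n')\}\preceq\gamma_{n,n'}$, (ii) $n\le\tilde n\le n'\Rightarrow\gamma_{n,n'}\preceq\gamma_{\tilde n,n'}$. $\mathrm{cl}_{i^*}(v)_i=v_i$ ($i<i^*$), $\sum_{j\ge i^*}v_j$ ($i=i^*$), $0$ ($i>i^*$). $\varphi^{(\gamma)}_{n'}(v)=\sum_{n=0}^\infty v_n\,\mathrm{cl}_{\min(n,n')}(\gamma_{\min(n,n'),n'})$. *)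

From HB Require Import structures.
From mathcomp Require Import all_boot all_order all_algebra.
From mathcomp Require Import boolp reals.
Set Implicit Arguments. Unset Strict Implicit. Unset Printing Implicit Defensive.
Import Order.TTheory GRing.Theory Num.Theory.

(* v_j := nth 0 v j ; entries beyond size v are 0. *)
Definition ventry (v : seq nat) (j : nat) : nat := nth 0%N v j.
Definition tailsum (v : seq nat) (J : nat) : nat := sumn (drop J v).
Definition vle (v w : seq nat) : Prop := forall J : nat, tailsum v J <= tailsum w J.
Definition vadd (v w : seq nat) : seq nat :=
  mkseq (fun i => ventry v i + ventry w i) (maxn (size v) (size w)).
Definition vscale (c : nat) (v : seq nat) : seq nat := map (fun a => c * a) v.
Definition vunit (i : nat) : seq nat := mkseq (fun j => nat_of_bool (j == i)) i.+1.
Definition cl (istar : nat) (v : seq nat) : seq nat :=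
  mkseq (fun i => if i < istar then ventry v i
                  else if i == istar then tailsum v istar else 0%N) istar.+1.

Local Open Scope ring_scope.
Record layer (R : realType) (n n' : nat) := Layer {
  lW : 'M[R]_(n', n);
  lb : 'cV[R]_n' }.

Definition relu (R : realType) (t : R) : R := Num.max t 0.
Definition preact (R : realType) n n' (h : layer R n n') (x : 'cV[R]_n) : 'cV[R]_n' :=
  lW h *m x + lb h.
Definition apply_layer (R : realType) n n' (h : layer R n n') (x : 'cV[R]_n) : 'cV[R]_n' :=
  map_mx (@relu R) (preact h x).
Definition sig (R : realType) n n' (h : layer R n n') (x : 'cV[R]_n) : {ffun 'I_n' -> bool} :=
  [ffun i => 0 < preact h x i 0].
Local Close Scope ring_scope.

Definition ones n (s : {ffun 'I_n -> bool}) : nat := \sum_(i < n) nat_of_bool (s i).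

Definition sigset (R : realType) n n' (h : layer R n n') : {set {ffun 'I_n' -> bool}} :=
  [set s | `[< exists x : 'cV[R]_n, sig h x = s >]].

Definition Hist n' (S : {set {ffun 'I_n' -> bool}}) : seq nat :=
  mkseq (fun j => #|[set s in S | ones s == j]|) n'.+1.

(* gamma n n' = γ_{n,n'} (only used for n' >= 1, n <= n').
   (i): for n >= 1, max_{h in RL(n,n')} H_{n'}(S_h) ⪯ γ_{n,n'}, stated pointwise
        (tail sums of the max are the max of tail sums);
        for n = 0, the convention H_{n'}(S_h) = e_0. *)
Definition isGamma (R : realType) (gamma : nat -> nat -> seq nat) : Prop :=
  (forall n' n : nat, 0 < n' -> n <= n' ->
     (if n == 0 then vle (vunit 0) (gamma 0 n')
      else forall h : layer R n n', vle (Hist (sigset h)) (gamma n n')))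
  /\
  (forall n' n nt : nat, 0 < n' -> n <= nt -> nt <= n' ->
     vle (gamma n n') (gamma nt n')).

Definition phi (gamma : nat -> nat -> seq nat) (n' : nat) (v : seq nat) : seq nat :=
  \big[vadd/[::]]_(0 <= n < size v)
     vscale (ventry v n) (cl (minn n n') (gamma (minn n n') n')).

(* dims l = n_l ; layers l : RL(n_l, n_{l+1}) is h_{l+1}. *)
Fixpoint feat (R : realType) (dims : nat -> nat)
  (layers : forall l : nat, layer R (dims l) (dims l.+1)) (l : nat)
  : 'cV[R]_(dims 0) -> 'cV[R]_(dims l) :=
  match l with
  | 0 => fun x => x
  | l'.+1 => fun x => apply_layer (layers l') (feat layers l' x)
  end.

(* truncated multi signature tuples (s_1,...,s_l); component k : 'I_l is s_{k+1} *)
Definition msigT (dims : nat -> nat) (l : nat) : finType :=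
  {dffun forall k : 'I_l, {ffun 'I_(dims k.+1) -> bool}}.

Definition msig (R : realType) (dims : nat -> nat)
  (layers : forall l : nat, layer R (dims l) (dims l.+1)) (l : nat)
  (x : 'cV[R]_(dims 0)) : msigT dims l :=
  [ffun k : 'I_l => sig (layers k) (feat layers k x)].

Definition msigset (R : realType) (dims : nat -> nat)
  (layers : forall l : nat, layer R (dims l) (dims l.+1)) (l : nat)
  : {set msigT dims l} :=
  [set t | `[< exists x : 'cV[R]_(dims 0), msig layers l x = t >]].

Definition minones (dims : nat -> nat) (l : nat) (t : msigT dims l) : nat :=
  \big[minn/dims 0]_(k < l) ones (t k).

Definition Htil (dims : nat -> nat) (l : nat) (U : {set msigT dims l}) : seq nat :=
  mkseq (fun j => #|[set t in U | minones t == j]|) (dims 0).+1.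

From mathcomp Require Import all_boot all_order all_algebra.
From mathcomp Require Import boolp reals.
Set Implicit Arguments. Unset Strict Implicit. Unset Printing Implicit Defensive.
Import Order.TTheory GRing.Theory Num.Theory.

(* Fix a prefix p = (s_1, ..., s_(l-1)) of multi signatures. On the inputs realising p every
   ReLU layer acts as a 0/1 diagonal matrix, so the features after l-1 layers are an affine
   function of x whose linear part has rank at most m := min(n_0, |s_1|, ..., |s_(l-1)|).
   Factoring the linear part of layer l through that rank shows that the last signatures s_l
   extending p are signatures of one ReLU layer with min(m, n_l) inputs; property (i) of Gamma
   bounds their tail counts by gamma_(min(m, n_l), n_l), and since min(m, |s_l|) <= min(m, n_l)
   the truncation cl can be applied. Summing over the prefixes p gives phi. *)

Lemma tailsum_nat v J N : size v <= N -> tailsum v J = \sum_(J <= j < N) ventry v j.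
Proof.
elim: v J N => [|a v IH] J N /=.
  move=> _; rewrite /tailsum drop_oversize //= big1 // => j _.
  by rewrite /ventry nth_nil.
case: N => [//|N]; rewrite ltnS => hs.
case: J => [|J]; last by rewrite big_add1 /= -(IH J N hs).
by rewrite big_nat_recl // /tailsum drop0 /= -(IH 0 N hs) /tailsum drop0.
Qed.

Lemma tailsum_indicator v J N :
  size v <= N -> tailsum v J = \sum_(0 <= j < N) ventry v j * (J <= j).
Proof.
move=> hv; rewrite (tailsum_nat J hv) big_geq_mkord big_mkcondr big_mkord /=.
by apply: eq_bigr => j _; case: (J <= j); rewrite ?muln1 ?muln0.
Qed.

Lemma tailsum_vadd v w J : tailsum (vadd v w) J = tailsum v J + tailsum w J.
Proof.
rewrite (tailsum_nat J (leq_maxl (size v) (size w))).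
rewrite (tailsum_nat J (leq_maxr (size v) (size w))).
rewrite (tailsum_nat J (eq_leq (size_mkseq _ _))) -big_split /=.
by apply: eq_big_nat => j /andP[_ hj]; rewrite /ventry nth_mkseq.
Qed.

Lemma tailsum_vscale c v J : tailsum (vscale c v) J = c * tailsum v J.
Proof.
rewrite /tailsum /vscale -map_drop.
by elim: (drop J v) => [|a s /= ->]; rewrite ?muln0 ?mulnDr.
Qed.

Lemma tailsum_big_vadd I (r : seq I) (P : pred I) (F : I -> seq nat) J :
  tailsum (\big[vadd/[::]]_(i <- r | P i) F i) J = \sum_(i <- r | P i) tailsum (F i) J.
Proof.
apply: (big_morph (tailsum^~ J) (fun v w => tailsum_vadd v w J)).
by rewrite /tailsum drop_oversize.
Qed.

Lemma tailsum_cl i v J : tailsum (cl i v) J = if J <= i then tailsum v J else 0.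
Proof.
rewrite /cl (tailsum_nat J (eq_leq (size_mkseq _ i.+1))).
case: ifP => hJ; last by rewrite big_geq // ltnNge hJ.
rewrite big_nat_recr //= [ventry _ i]/ventry nth_mkseq // ltnn eqxx.
set N := maxn (size v) i.+1.
rewrite (tailsum_nat J (leq_maxl _ i.+1)) (tailsum_nat i (leq_maxl _ i.+1)).
rewrite [in RHS](@big_cat_nat _ _ _ i) //=; last by rewrite ltnW ?leq_maxr.
congr (_ + _); apply: eq_big_nat => j /andP[_ hj].
by rewrite /ventry nth_mkseq ?hj // ltnW.
Qed.

Lemma tailsum_phi gamma N v J :
  tailsum (phi gamma N v) J =
  \sum_(0 <= n < size v) ventry v n * tailsum (cl (minn n N) (gamma (minn n N) N)) J.
Proof.
by rewrite tailsum_big_vadd; apply: eq_bigr => n _; rewrite tailsum_vscale.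
Qed.

Definition histogram (T : finType) (U : {set T}) (f : T -> nat) (M : nat) : seq nat :=
  mkseq (fun j => #|[set t in U | f t == j]|) M.+1.

Section Histogram.
Variables (T : finType) (U : {set T}) (f : T -> nat) (M : nat).
Hypothesis f_le : forall t, f t <= M.

Lemma size_histogram : size (histogram U f M) = M.+1.
Proof. exact: size_mkseq. Qed.

Lemma sum_histogram (g : nat -> nat) :
  \sum_(0 <= j < M.+1) ventry (histogram U f M) j * g j = \sum_(t in U) g (f t).
Proof.
rewrite big_mkord.
have countE j : #|[set t in U | f t == j]| = \sum_(t in U) (f t == j).
  rewrite -sum1_card big_mkcond [RHS]big_mkcond /=.
  by apply: eq_bigr => t _; rewrite inE; case: (t \in U); case: (f t == j).
rewrite (eq_bigr (fun j : 'I_M.+1 => \sum_(t in U) (f t == j) * g j)); last first.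
  by move=> j _; rewrite /ventry /histogram nth_mkseq // countE big_distrl.
rewrite exchange_big /=; apply: eq_bigr => t _.
have ft : f t < M.+1 by rewrite ltnS.
rewrite (bigD1 (Ordinal ft)) //= eqxx mul1n big1 ?addn0 // => j.
by rewrite -val_eqE eq_sym => /negbTE /= ->.
Qed.

Lemma tailsum_histogram J : tailsum (histogram U f M) J = \sum_(t in U) (J <= f t).
Proof. by rewrite (tailsum_indicator J (eq_leq size_histogram)) (sum_histogram (leq J)). Qed.

End Histogram.

Lemma big_ord_recr_minn n a (F : 'I_n.+1 -> nat) :
  \big[minn/a]_(i < n.+1) F i =
  minn (\big[minn/a]_(i < n) F (widen_ord (leqnSn n) i)) (F ord_max).
Proof.
elim: n F => [|n IH] F.
  by rewrite big_ord_recl !big_ord0 minnC; congr (minn _ (F _)); apply: val_inj.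
rewrite big_ord_recl IH [in RHS]big_ord_recl minnA.
congr (minn (minn (F _) _) (F _)); try exact: val_inj.
by apply: eq_bigr => i _; congr F; apply: val_inj.
Qed.

Lemma ones_le n (s : {ffun 'I_n -> bool}) : ones s <= n.
Proof.
rewrite /ones -[n in _ <= n]card_ord -sum1_card.
by apply: leq_sum => i _; apply: leq_b1.
Qed.

Lemma minones_le dims l (t : msigT dims l) : minones t <= dims 0.
Proof.
rewrite /minones; elim/big_rec: _ => // i m _ hm.
exact: leq_trans (geq_minr _ _) hm.
Qed.

Section Truncation.
Variables (dims : nat -> nat) (k : nat).

Definition msprefix (t : msigT dims k.+1) : msigT dims k :=
  [ffun i : 'I_k => t (widen_ord (leqnSn k) i)].

Definition mslast (t : msigT dims k.+1) : {ffun 'I_(dims k.+1) -> bool} := t ord_max.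

Lemma minones_msprefix t : minones t = minn (minones (msprefix t)) (ones (mslast t)).
Proof.
rewrite /minones big_ord_recr_minn; congr minn.
by apply: eq_bigr => i _; rewrite ffunE.
Qed.

Lemma msprefix_mslast_inj t1 t2 :
  msprefix t1 = msprefix t2 -> mslast t1 = mslast t2 -> t1 = t2.
Proof.
move=> hp hl; apply/ffunP => i.
case: (unliftP ord_max i) => [j ->|->]; last exact: hl.
have -> : lift ord_max j = widen_ord (leqnSn k) j.
  by apply: val_inj; rewrite /= /bump leqNgt ltn_ord.
by have /ffunP/(_ j) := hp; rewrite !ffunE.
Qed.

End Truncation.
Arguments msprefix {dims k} t.
Arguments mslast {dims k} t.

Local Open Scope ring_scope.

Definition mask_mx (F : fieldType) n (s : {ffun 'I_n -> bool}) : 'M[F]_n :=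
  diag_mx (\row_i (s i)%:R).
Arguments mask_mx {F n}.

Lemma mxrank_mask_mx (F : fieldType) n (s : {ffun 'I_n -> bool}) :
  (\rank (mask_mx s : 'M[F]_n) <= ones s)%N.
Proof.
rewrite /mask_mx diag_mx_sum_delta /ones.
apply: (big_ind2 (fun (A : 'M[F]_n) m => \rank A <= m)%N); first by rewrite mxrank0.
  by move=> A1 m1 A2 m2 h1 h2; apply: leq_trans (mxrank_add _ _) (leq_add h1 h2).
by move=> i _; rewrite mxE; case: (s i); rewrite ?scale1r ?mxrank_delta ?scale0r ?mxrank0.
Qed.

Lemma relu_mask_mx (R : realType) n (v : 'cV[R]_n) :
  map_mx (@relu R) v = mask_mx [ffun i => 0 < v i 0] *m v.
Proof.
apply/matrixP => i j; rewrite ord1 mul_diag_mx !mxE ffunE /relu.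
by case: ltrP => h; rewrite ?mul1r ?mul0r.
Qed.

Lemma mx_rank_factor (F : fieldType) m n t (M : 'M[F]_(m, n)) :
  (\rank M <= t)%N -> exists (P : 'M_(m, t)) (Q : 'M_(t, n)), P *m Q = M.
Proof.
move=> hM; exists (col_ebase M *m pid_mx (\rank M)), (pid_mx (\rank M) *m row_ebase M).
by rewrite mulmxA -(mulmxA (col_ebase M)) pid_mx_id // mulmx_ebase.
Qed.

Section Network.
Variables (R : realType) (dims : nat -> nat)
  (layers : forall l : nat, layer R (dims l) (dims l.+1)).

Lemma msig_prefix k x : msprefix (msig layers k.+1 x) = msig layers k x.
Proof. by apply/ffunP => i; rewrite !ffunE. Qed.

Lemma msig_last k x : mslast (msig layers k.+1 x) = sig (layers k) (feat layers k x).
Proof. by rewrite /mslast ffunE. Qed.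

Lemma feat_affine_on_msig k (q : msigT dims k) :
  exists (A : 'M[R]_(dims k, dims 0)) (c : 'cV[R]_(dims k)),
    (\rank A <= minones q)%N /\ forall x, msig layers k x = q -> feat layers k x = A *m x + c.
Proof.
elim: k q => [|k IH] q.
  exists 1%:M, 0; split; first by rewrite /minones big_ord0 rank_leq_col.
  by move=> x _; rewrite mul1mx addr0.
have [A [c [rkA featE]]] := IH (msprefix q).
pose D : 'M[R]_(dims k.+1) := mask_mx (mslast q); pose W := lW (layers k).
exists (D *m W *m A), (D *m (W *m c + lb (layers k))); split.
  rewrite minones_msprefix leq_min (leq_trans (mxrankM_maxr _ _) rkA) /=.
  by rewrite -mulmxA (leq_trans (mxrankM_maxl _ _)) ?mxrank_mask_mx.
move=> x hq; have hp : msig layers k x = msprefix q by rewrite -hq msig_prefix.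
have hs : sig (layers k) (feat layers k x) = mslast q by rewrite -hq msig_last.
rewrite /= /apply_layer relu_mask_mx -[[ffun _ => _]]/(sig _ _) hs /preact (featE _ hp).
by rewrite !mulmxDr !mulmxA addrA.
Qed.

Definition next_sigs k (p : msigT dims k) : {set {ffun 'I_(dims k.+1) -> bool}} :=
  mslast @: [set t in msigset layers k.+1 | msprefix t == p].

Lemma next_sigs_sub_layer k (p : msigT dims k) :
  exists h : layer R (minn (minones p) (dims k.+1)) (dims k.+1),
    next_sigs p \subset sigset h.
Proof.
set d := minn (minones p) (dims k.+1); have [A [c [rkA featE]]] := feat_affine_on_msig p.
set W := lW (layers k); have rkWA : (\rank (W *m A) <= d)%N.
  by rewrite leq_min rank_leq_row (leq_trans (mxrankM_maxr _ _) rkA).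
have [P [Q PQ]] := mx_rank_factor rkWA.
exists (Layer P (W *m c + lb (layers k))); apply/subsetP => s /imsetP[t].
rewrite !inE => /andP[/asboolP[x tE] /eqP pE] ->.
have hx : msig layers k x = p by rewrite -pE -tE msig_prefix.
rewrite -tE msig_last; apply/asboolP; exists (Q *m x).
apply/ffunP => i; rewrite !ffunE /preact /= (featE x hx).
by rewrite mulmxA PQ mulmxDr !mulmxA addrA.
Qed.

Lemma HtilE l (U : {set msigT dims l}) : Htil U = histogram U (@minones dims l) (dims 0).
Proof. by []. Qed.

Lemma tailsum_Htil_succ k J :
  tailsum (Htil (msigset layers k.+1)) J =
  (\sum_(p in msigset layers k) \sum_(s in next_sigs p) (J <= minn (minones p) (ones s)))%N.
Proof.
rewrite HtilE tailsum_histogram; last exact: minones_le.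
have prefix_in t : t \in msigset layers k.+1 -> msprefix t \in msigset layers k.
  by rewrite !inE => /asboolP[x <-]; apply/asboolP; exists x; rewrite msig_prefix.
rewrite (partition_big msprefix _ prefix_in) /=; apply: eq_bigr => p _.
rewrite big_imset /=; last first.
  move=> t1 t2; rewrite !inE => /andP[_ /eqP p1] /andP[_ /eqP p2].
  by apply: msprefix_mslast_inj; rewrite p1 p2.
apply: eq_big => [t|t /andP[_ /eqP <-]]; first by rewrite [RHS]inE.
by rewrite (minones_msprefix t).
Qed.

End Network.

Lemma card_sigset_layer0 (R : realType) N (h : layer R 0 N) : (#|sigset h| <= 1)%N.
Proof.
rewrite -(cards1 (sig h 0)); apply/subset_leq_card/subsetP => s.
by rewrite !inE => /asboolP[x <-]; rewrite [x]flatmx0.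
Qed.

Local Close Scope ring_scope.

Section GammaBounds.
Variables (R : realType) (gamma : nat -> nat -> seq nat).
Hypothesis gammaP : isGamma R gamma.

Lemma sum_tail_sigset_le_gamma d N (h : layer R d N) (E : {set {ffun 'I_N -> bool}}) J :
  0 < N -> d <= N -> J <= d -> E \subset sigset h ->
  \sum_(s in E) (J <= ones s) <= tailsum (gamma d N) J.
Proof.
move=> N_gt0 dN Jd Eh; apply: (@leq_trans (\sum_(s in sigset h) (J <= ones s))).
  by rewrite [X in _ <= X](big_setID E) /= (setIidPr Eh) leq_addr.
have := gammaP.1 N d N_gt0 dN; case: d h dN Jd {Eh} => [|d] h _ Jd /=.
  (* a layer without inputs has a single signature; Gamma dominates e_0 here *)
  move: Jd; rewrite leqn0 => /eqP -> /(_ 0%N) /=; apply: leq_trans.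
  by rewrite (eq_bigr (fun=> 1)) // sum1_card card_sigset_layer0.
by move=> /(_ h J); rewrite /Hist -/(histogram _ _ _) tailsum_histogram //; apply: ones_le.
Qed.

Lemma sum_tail_next_sigs_le_cl dims (layers : forall l, layer R (dims l) (dims l.+1))
    k (p : msigT dims k) J :
  0 < dims k.+1 ->
  \sum_(s in next_sigs layers p) (J <= minn (minones p) (ones s))
    <= tailsum (cl (minn (minones p) (dims k.+1))
                   (gamma (minn (minones p) (dims k.+1)) (dims k.+1))) J.
Proof.
move=> N_gt0; set d := minn (minones p) (dims k.+1).
rewrite tailsum_cl; case: (leqP J d) => [Jd | dJ].
  apply: (@leq_trans (\sum_(s in next_sigs layers p) (J <= ones s))).
    apply: leq_sum => s _; rewrite leq_min.
    by case: (J <= ones s); rewrite ?andbT ?andbF ?leq_b1.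
  have [h sub_h] := next_sigs_sub_layer layers p.
  exact: sum_tail_sigset_le_gamma N_gt0 (geq_minr _ _) Jd sub_h.
rewrite big1 // => s _; apply/eqP; rewrite eqb0 -ltnNge (leq_ltn_trans _ dJ) //.
by rewrite leq_min geq_minl (leq_trans (geq_minr _ _) (ones_le s)).
Qed.

End GammaBounds.

Theorem mainTheorem4 (R : realType) (L : nat) (dims : nat -> nat)
  (dims_pos : forall l : nat, l <= L -> 0 < dims l)
  (layers : forall l : nat, layer R (dims l) (dims l.+1))
  (gamma : nat -> nat -> seq nat) (hgamma : isGamma R gamma) :
  forall l : nat, 2 <= l -> l <= L ->
    vle (Htil (msigset layers l))
        (phi gamma (dims l) (Htil (msigset layers l.-1))).
Proof.
case=> [//|k] _ kL J /=.
rewrite tailsum_Htil_succ tailsum_phi HtilE size_histogram.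
rewrite (sum_histogram _ (@minones_le dims k)).
apply: leq_sum => p _; exact: sum_tail_next_sigs_le_cl (dims_pos _ kL).
Qed.
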